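(* Let $N_1$ and $N_2$ be phylogenetic networks on the same set $S$ of taxa. If $m(N_1,N_2)=0$ (equivalently, $\Upsilon(N_1)=\Upsilon(N_2)$), then $N_1$ and $N_2$ are indistinguishable, i.e. their reduced versions satisfy $R(N_1)\cong R(N_2)$.
   Context: A phylogenetic network on a finite set $S$ of taxa is a finite rooted directed acyclic graph (exactly one node without parents) whose leaves (nodes without children) are bijectively labeled by the elements of $S$. A tree node is a node with at most one parent; a hybrid node is a node with more than one parent. The height $h(v)$ of a node is the largest length of a directed path from $v$ to a leaf. The nested label $\ell(v)$ of a node $v$ is defined by induction on height: if $v$ is a leaf labeled $i$, $\ell(v)=\{i\}$; otherwise, if $v_1,\dots,v_k$ are the children of $v$, $\ell(v)$ is the multiset $\{\ell(v_1),\dots,\ell(v_k)\}$. $\Upsilon(N)$ is the multiset of nested labels of all nodes of $N$ (each nested label counted with multiplicity the number of nodes having it), and $m(N_1,N_2)=\frac12|\Upsilon(N_1)\bigtriangleup\Upsilon(N_2)|$, where for multisets $M_1,M_2$ the symmetric difference gives each element multiplicity $|M_1(x)-M_2(x)|$ and $|M|$ is the sum of multiplicities. The cluster of a node $u$ is the set of labels of leaves descending from $u$; two nodes are convergent when they have the same cluster. For a node $u$, $N(u)$ denotes the subgraph induced on the descendants of $u$; a clade of $N$ is a subgraph $N(u)$ all of whose nodes are tree nodes of $N$. The reduced version $R(N)$ is obtained as follows. If $N$ has no pair of distinct convergent nodes, $R(N)=N$. Otherwise: (0) for every maximal clade $T$ of $N$ with root $r_T$, insert a new node $h_T$ between $r_T$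 and its only parent, label $h_T$ by a symbol for $T$, and remove $r_T$ and its descendants, so $h_T$ becomes a ''symbolic leaf''; call the result $N^*$ (its leaves are symbolic leaves and hybrid leaves of $N$). (1) Remove from $N^*$ all internal nodes that are convergent in $N$ with some other node, and all internal nodes of $N^*$ that are descendants of some removed node. (2) For every remaining node $x$ that was a parent of a node $v$ removed in (1), add an arc from $x$ to every (hybrid or symbolic) leaf that was a descendant of $v$ in $N^*$, if such an arc does not already exist. (3) For every symbolic leaf $h_T$, remove its label and append the clade $T$ to it via an arc $(h_T,r_T)$. (4) Replace every node with exactly one parent and one child by an arc from its parent to its child. Isomorphism $\cong$ of such leaf-labeled DAGs means a digraph isomorphism mapping each leaf to the leaf with the same label. Two networks are indistinguishable when $R(N_1)\cong R(N_2)$. *)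

From mathcomp Require Import all_boot.
From mathcomp Require Import boolp.
From Stdlib Require List Permutation.

Set Implicit Arguments.
Unset Strict Implicit.
Unset Printing Implicit Defensive.

(* Nested labels: a leaf {i}, or a (finite) multiset of nested labels.        *)
(* Multisets are represented by lists; equality of nested labels is the       *)
(* structural multiset equality [nl_eqv] (lists equal up to permutation,      *)
(* elementwise recursively).                                                  *)
Inductive nlabel (S : Type) : Type :=
| NLeaf of S
| NNode of seq (nlabel S).
Arguments NLeaf {S}.
Arguments NNode {S}.

Inductive nl_eqv {S : Type} : nlabel S -> nlabel S -> Prop :=
| nle_leaf s : nl_eqv (NLeaf s) (NLeaf s)
| nle_node l1 l2 l3 :
    Permutation.Permutation l1 l2 -> List.Forall2 nl_eqv l2 l3 ->
    nl_eqv (NNode l1) (NNode l3).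

Section Network.
Variables (S V : finType) (E : rel V) (lf : S -> V).

Definition parents (v : V) : {set V} := [set u | E u v].
Definition children (v : V) : {set V} := [set w | E v w].
Definition is_leaf (v : V) : bool := [forall w, ~~ E v w].
Definition is_tree_node (v : V) : bool := #|parents v| <= 1.
Definition is_hybrid (v : V) : bool := 1 < #|parents v|.

Definition is_network : Prop :=
  [/\ (forall u v, E u v -> ~~ connect E v u),
      (exists r, forall u, (parents u == set0) = (u == r)),
      injective lf &
      (forall v, is_leaf v <-> exists s, lf s = v)].

Definition labN (v : V) : option S := [pick s | lf s == v].

(* nested label, defined by recursion on height; #|V| exceeds every height *)
Fixpoint nlab_fuel (k : nat) (v : V) : nlabel S :=
  match k with
  | 0 => NNode [::]
  | k'.+1 =>
      if is_leaf v then
        (if labN v is Some s then NLeaf s else NNode [::])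
      else NNode (map (nlab_fuel k') (enum (children v)))
  end.
Definition nlab (v : V) : nlabel S := nlab_fuel #|V| v.

Definition Ups_mult (x : nlabel S) : nat :=
  #|[set v : V | `[< nl_eqv (nlab v) x >]]|.

Definition cluster (u : V) : {set S} := [set s | connect E u (lf s)].
Definition has_conv : bool :=
  [exists u, exists w, (u != w) && (cluster u == cluster w)].
Definition conv_other (u : V) : bool :=
  [exists w, (w != u) && (cluster w == cluster u)].

(* u lies in a clade  iff  N(u) consists of tree nodes only *)
Definition inC (u : V) : bool := [forall v, connect E u v ==> is_tree_node v].
Definition clade_root (r : V) : bool := inC r && [forall p, E p r ==> ~~ inC p].
(* internal nodes of N^* (nodes of N outside clades that are not leaves) *)
Definition internalS (u : V) : bool := ~~ inC u && ~~ is_leaf u.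
Definition hleaf (u : V) : bool := is_leaf u && is_hybrid u.
Definition removed (u : V) : bool :=
  internalS u && [exists d, [&& internalS d, conv_other d & connect E d u]].
Definition keptS (u : V) : bool := internalS u && ~~ removed u.
Definition newarc (x t : V) : bool :=
  [exists v, [&& removed v, E x v & connect E v t]].

(* Node type of the construction: inl v = original node v,
   inr r = the new node h_T of the maximal clade T rooted at r. *)
Definition keep3 (a : V + V) : bool :=
  match a with
  | inl v => [|| keptS v, hleaf v | inC v]
  | inr r => clade_root r
  end.

(* arcs of the graph obtained after steps (0)-(3) *)
Definition A3 (a b : V + V) : bool :=
  match a, b with
  | inl x, inl y =>
      [|| [&& keptS x || hleaf x, keptS y || hleaf y & E x y],
          [&& inC x, inC y & E x y]
        | [&& keptS x, hleaf y & newarc x y]]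
  | inl x, inr r => [&& clade_root r, keptS x & E x r || newarc x r]
  | inr r, inl y => clade_root r && (y == r)
  | inr _, inr _ => false
  end.

(* step (4): nodes with exactly one parent and one child are suppressed *)
Definition elem3 (b : V + V) : bool :=
  [&& keep3 b, #|[set a | A3 a b]| == 1 & #|[set c | A3 b c]| == 1].
Definition A3e : rel (V + V) := fun x y => A3 x y && elem3 y.

(* R(N): node set keepR, arc relation AR, leaf labels labR *)
Definition keepR (a : V + V) : bool :=
  if has_conv then keep3 a && ~~ elem3 a
  else (if a is inl _ then true else false).

Definition AR (a b : V + V) : bool :=
  if has_conv then
    [&& keepR a, keepR b & [exists c, connect A3e a c && A3 c b]]
  else
    match a, b with inl x, inl y => E x y | _, _ => false end.

Definition labR (a : V + V) : option S :=
  if a is inl v then labN v else None.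

End Network.

(* Isomorphism of leaf-labelled digraphs given as (node predicate, arc
   relation, labelling) on finite ambient types. *)
Definition ldag_iso (S W1 W2 : finType)
    (k1 : pred W1) (A1 : rel W1) (l1 : W1 -> option S)
    (k2 : pred W2) (A2 : rel W2) (l2 : W2 -> option S) : Prop :=
  exists f : W1 -> W2,
    [/\ {in k1, forall x, k2 (f x)},
        {in k2, forall y, exists2 x, k1 x & f x = y},
        {in k1 &, injective f},
        {in k1 &, forall x y, A2 (f x) (f y) = A1 x y} &
        {in k1, forall x, l2 (f x) = l1 x}].

Definition Ups_eq (S V1 V2 : finType) (E1 : rel V1) (lf1 : S -> V1)
    (E2 : rel V2) (lf2 : S -> V2) : Prop :=
  forall x : nlabel S, Ups_mult E1 lf1 x = Ups_mult E2 lf2 x.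

Definition indistinguishable (S V1 V2 : finType) (E1 : rel V1) (lf1 : S -> V1)
    (E2 : rel V2) (lf2 : S -> V2) : Prop :=
  ldag_iso (keepR E1 lf1) (AR E1 lf1) (labR lf1)
           (keepR E2 lf2) (AR E2 lf2) (labR lf2).

(* Call nodes u1 of N1 and u2 of N2 similar when their nested labels are
   equivalent.  Similar nodes have equal labels and clusters, and every child of
   u1 is similar to some child of u2.  Since nested labels strictly shrink along
   arcs, no node is similar to a proper descendant; as two similar nodes share a
   leaf below them, a node of a clade is similar to no other node of its network.
   Upsilon(N1) = Upsilon(N2) says that corresponding similarity classes have the
   same size in N1 and N2.  Hence a node is alone in its class iff its partner
   is, and then its parents, being the nodes having a child similar to it, are
   equinumerous with those of its partner.  Every node surviving in R(N) is
   alone in its class, and every ingredient of the construction (clade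
   membership, convergence, removal, new arcs, suppressed nodes) is invariant
   under similarity; so any map sending each node of N1 to a similar node of N2
   induces an isomorphism R(N1) ~ R(N2). *)

From mathcomp Require Import all_boot.
From mathcomp Require Import boolp.
From Stdlib Require List Permutation.
Import Permutation.

Set Implicit Arguments.
Unset Strict Implicit.
Unset Printing Implicit Defensive.

Lemma In_map_mem (A : eqType) (B : Type) (f : A -> B) x s :
  x \in s -> List.In (f x) (map f s).
Proof. by elim: s => //= y s IH; rewrite inE => /predU1P [->|/IH]; [left|right]. Qed.

Lemma In_mapP (A : eqType) (B : Type) (f : A -> B) y s :
  List.In y (map f s) -> exists2 x, x \in s & y = f x.
Proof.
elim: s => //= x s IH [<-|/IH [z Hz ->]]; first by exists x; rewrite ?mem_head.
by exists z; rewrite // inE Hz orbT.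
Qed.

Lemma Forall2_In_l (A B : Type) (R : A -> B -> Prop) l m x :
  List.Forall2 R l m -> List.In x l -> exists2 y, List.In y m & R x y.
Proof.
elim=> //= a b l' m' Hab _ IH [<-|/IH [y Hy Hr]]; first by exists b; first left.
by exists y; first right.
Qed.

Lemma Forall2_impl_in (A B : Type) (R R' : A -> B -> Prop) l m :
  (forall x y, List.In x l -> R x y -> R' x y) ->
  List.Forall2 R l m -> List.Forall2 R' l m.
Proof.
move=> HR H; elim: H HR => [|x y l' m' Hxy _ IH] HR; constructor.
- by apply: HR => //; left.
- by apply: IH => a b Ha; apply: HR; right.
Qed.

Lemma Forall2_trans_in (A : Type) (R : A -> A -> Prop) l m n :
  (forall x, List.In x l -> forall y z, R x y -> R y z -> R x z) ->
  List.Forall2 R l m -> List.Forall2 R m n -> List.Forall2 R l n.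
Proof.
move=> HR H; elim: H n HR => [|x y l' m' Hxy _ IH] n HR Hmn //.
inversion Hmn; subst; constructor.
- exact: HR (or_introl erefl) _ _ Hxy _.
- by apply: IH => // u Hu; apply: HR; right.
Qed.

Lemma sumn_Permutation (l m : seq nat) : Permutation l m -> sumn l = sumn m.
Proof. by elim=> //= [x l' m' _ -> | x y l' | l' m' k _ -> _ ->] //; rewrite addnCA. Qed.

Lemma sumn_map_mem (T : eqType) (f : T -> nat) x s : x \in s -> f x <= sumn (map f s).
Proof.
elim: s => //= y s IH; rewrite inE => /predU1P [->|/IH H]; first exact: leq_addr.
exact: leq_trans H (leq_addl _ _).
Qed.

Lemma connect_last (T : finType) (e : rel T) u v : connect e u v -> u != v ->
  exists2 c, connect e u c & e c v.
Proof.
case/connectP=> p; elim/last_ind: p => [|p c _] /=; first by move=> _ ->; rewrite eqxx.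
rewrite rcons_path last_rcons => /andP [Hp Ec] -> _.
by exists (last u p) => //; apply/connectP; exists p.
Qed.

Lemma card_set_asbool_split (T : finType) (P Q : T -> Prop) : (forall x, Q x -> P x) ->
  #|[set x | `[< P x >]]| = #|[set x | `[< Q x >]]| + #|[set x | `[< P x /\ ~ Q x >]]|.
Proof.
move=> HQ; rewrite -(cardsID [set x | `[< Q x >]] [set x | `[< P x >]]).
congr addn; apply: eq_card => x; rewrite !inE.
  by apply/andP/asboolP => [[_ /asboolP]|Hq] //; split; apply/asboolP; auto.
by apply/andP/asboolP => [[/asboolP Hq /asboolP Hp]|[Hp Hq]]; split => //; apply/asboolP.
Qed.

Section NestedLabels.
Variable T : Type.

(* The automatic induction principle of [nlabel] has no hypothesis for the
   members of a node's list. *)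
Definition nlabel_ind_in (P : nlabel T -> Prop)
    (Hleaf : forall s, P (NLeaf s))
    (Hnode : forall l, (forall x, List.In x l -> P x) -> P (NNode l)) :
    forall t, P t :=
  fix F t := match t with
  | NLeaf s => Hleaf s
  | NNode l => Hnode l ((fix G l : forall x, List.In x l -> P x :=
       match l with
       | nil => fun x H => False_ind _ H
       | y :: l' => fun x H => match H with
                    | or_introl e => eq_ind y P (F y) x e
                    | or_intror H' => G l' x H' end
       end) l)
  end.

Lemma nl_eqv_refl (x : nlabel T) : nl_eqv x x.
Proof.
elim/nlabel_ind_in: x => [s|l IH]; first by constructor.
apply: (nle_node (Permutation_refl l)).
elim: l IH => [|y l IHl] IH; constructor.
- by apply: IH; left.
- by apply: IHl => z Hz; apply: IH; right.
Qed.

Lemma nl_eqv_sym (x y : nlabel T) : nl_eqv x y -> nl_eqv y x.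
Proof.
elim/nlabel_ind_in: x y => [s|l1 IH] y H; inversion H; subst; first by constructor.
have H23 : List.Forall2 (fun a b => nl_eqv b a) l2 l3.
  apply: Forall2_impl_in H2 => a b Ha; apply: IH.
  exact: Permutation_in (Permutation_sym H1) Ha.
have [l3' [Hp Hf]] := Permutation_Forall2 (Permutation_sym H1) H23.
exact: nle_node Hp (List.Forall2_flip Hf).
Qed.

Lemma nl_eqv_trans (x y z : nlabel T) : nl_eqv x y -> nl_eqv y z -> nl_eqv x z.
Proof.
elim/nlabel_ind_in: x y z => [s|l1 IH] y z H H'; inversion H; subst => //.
inversion H'; subst.
have [l2' [Hp Hf]] := Permutation_Forall2 H3 (List.Forall2_flip H2).
have Hl1 := Permutation_trans H1 Hp.
apply: (nle_node Hl1); apply: Forall2_trans_in H4; last exact: List.Forall2_flip Hf.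
by move=> u Hu; apply: IH; apply: Permutation_in (Permutation_sym Hl1) Hu.
Qed.

Lemma nl_eqv_leafL (s : T) y : nl_eqv (NLeaf s) y -> y = NLeaf s.
Proof. by move=> H; inversion H. Qed.

Lemma nl_eqv_nodeL (l1 : seq (nlabel T)) y : nl_eqv (NNode l1) y ->
  exists l2 l3, [/\ y = NNode l3, Permutation l1 l2 & List.Forall2 nl_eqv l2 l3].
Proof. by move=> H; inversion H; exists l2, l3. Qed.

Fixpoint nl_size (t : nlabel T) : nat :=
  match t with NLeaf _ => 1 | NNode l => (sumn (map nl_size l)).+1 end.

Lemma nl_size_eqv (x y : nlabel T) : nl_eqv x y -> nl_size x = nl_size y.
Proof.
elim/nlabel_ind_in: x y => [s|l1 IH] y H; inversion H; subst => //=.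
congr S; rewrite (sumn_Permutation (Permutation_map nl_size H1)).
have {}IH u : List.In u l2 -> forall v, nl_eqv u v -> nl_size u = nl_size v.
  by move=> Hu; apply: IH; apply: Permutation_in (Permutation_sym H1) Hu.
elim: H2 IH => //= a b l m Hab _ IH2 IH.
by rewrite (IH a (or_introl erefl) b Hab) IH2 // => u Hu; apply: IH; right.
Qed.

End NestedLabels.

Section Network.
Variables (S V : finType) (E : rel V) (lf : S -> V).
Hypothesis HN : is_network E lf.

Definition desc (u : V) : {set V} := [set w | connect E u w].

Lemma acyclic_arc u v : E u v -> ~~ connect E v u.
Proof. by case: HN => H _ _ _; apply: H. Qed.

Lemma lf_inj : injective lf.
Proof. by case: HN. Qed.

Lemma is_leafP v : reflect (exists s, lf s = v) (is_leaf E v).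
Proof. by case: HN => _ _ _ H; apply: (iffP idP) => /H. Qed.

Lemma lf_leaf s : is_leaf E (lf s).
Proof. by apply/is_leafP; exists s. Qed.

Lemma arc_not_leaf u v : E u v -> ~~ is_leaf E u.
Proof. by move=> Euv; apply/forallPn; exists v; rewrite negbK. Qed.

Lemma card_desc_gt0 u : 0 < #|desc u|.
Proof. by apply/card_gt0P; exists u; rewrite inE connect0. Qed.

Lemma card_desc_arc u v : E u v -> #|desc v| < #|desc u|.
Proof.
move=> Euv; apply/proper_card/properP; split.
  by apply/subsetP => w; rewrite !inE; apply/connect_trans/connect1.
by exists u; rewrite inE ?connect0 ?acyclic_arc.
Qed.

Lemma labN_lf s : labN lf (lf s) = Some s.
Proof.
rewrite /labN; case: pickP => [s' /eqP/lf_inj -> //|/(_ s)].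
by rewrite eqxx.
Qed.

Lemma labN_not_leaf v : ~~ is_leaf E v -> labN lf v = None.
Proof.
move=> Hv; rewrite /labN; case: pickP => // s /eqP Hs.
by move: Hv; rewrite -Hs lf_leaf.
Qed.

Lemma nlab_fuel_stable k k' v : #|desc v| <= k -> #|desc v| <= k' ->
  nlab_fuel E lf k v = nlab_fuel E lf k' v.
Proof.
elim: k k' v => [|k IH] [|k'] v Hk Hk'; rewrite //=;
  try by move: (card_desc_gt0 v); rewrite ltnNge ?Hk ?Hk'.
case: ifP => // _; congr NNode; apply/eq_in_map => w.
rewrite mem_enum inE => /card_desc_arc Hw.
by apply: IH; rewrite -ltnS; apply: leq_trans Hw _.
Qed.

Lemma nlab_fuelE k v : #|desc v| <= k -> nlab_fuel E lf k v = nlab E lf v.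
Proof. by move=> Hk; apply: nlab_fuel_stable Hk (max_card _). Qed.

Lemma nlab_lf s : nlab E lf (lf s) = NLeaf s.
Proof.
rewrite -(nlab_fuelE (leqnn _)); case: #|desc _| (card_desc_gt0 (lf s)) => //= n _.
by rewrite lf_leaf labN_lf.
Qed.

Lemma nlab_node v : ~~ is_leaf E v ->
  nlab E lf v = NNode (map (nlab E lf) (enum (children E v))).
Proof.
move=> Hv; rewrite -(nlab_fuelE (leqnn _)).
case Hd: #|desc v| (card_desc_gt0 v) => [//|n] _ /=; rewrite (negbTE Hv).
congr NNode; apply/eq_in_map => w; rewrite mem_enum inE => /card_desc_arc.
by rewrite Hd ltnS => /nlab_fuelE.
Qed.

Lemma nlab_leafE v s : nlab E lf v = NLeaf s -> v = lf s.
Proof.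
case: (boolP (is_leaf E v)) => [/is_leafP [s' <-]|/nlab_node -> //].
by rewrite nlab_lf => -[->].
Qed.

Lemma is_leaf_nlab v : is_leaf E v = if nlab E lf v is NLeaf _ then true else false.
Proof.
case: (boolP (is_leaf E v)) => [/is_leafP [s <-]|/nlab_node -> //].
by rewrite nlab_lf.
Qed.

Lemma nl_size_arc u v : E u v -> nl_size (nlab E lf v) < nl_size (nlab E lf u).
Proof.
move=> Euv; rewrite (nlab_node (arc_not_leaf Euv)) /= ltnS -map_comp.
by apply: sumn_map_mem; rewrite mem_enum inE.
Qed.

Lemma nl_size_connect u v : connect E u v -> u != v ->
  nl_size (nlab E lf v) < nl_size (nlab E lf u).
Proof.
case/connectP=> p; elim: p u => [|w p IH] u /=; first by move=> _ ->; rewrite eqxx.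
case/andP=> Euw Hp Hv _; apply: leq_trans (nl_size_arc Euw).
case: (eqVneq w v) => [->|Hwv] //; exact: ltnW (IH _ Hp Hv Hwv).
Qed.

Lemma exists_leaf_desc u : exists s, connect E u (lf s).
Proof.
elim: {u}#|desc u| {-2}u (leqnn #|desc u|) => [|k IH] u Hk.
  by move: (card_desc_gt0 u); rewrite ltnNge Hk.
case: (boolP (is_leaf E u)) => [/is_leafP [s <-]|]; first by exists s.
case/forallPn => w; rewrite negbK => Euw.
have [|s Hs] := IH w; first by rewrite -ltnS (leq_trans (card_desc_arc Euw)).
by exists s; apply: connect_trans (connect1 Euw) Hs.
Qed.

End Network.

Definition sim (S V1 V2 : finType) (E1 : rel V1) (lf1 : S -> V1)
  (E2 : rel V2) (lf2 : S -> V2) (u1 : V1) (u2 : V2) :=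
  nl_eqv (nlab E1 lf1 u1) (nlab E2 lf2 u2).

Section Similarity.
Variables (S V1 V2 V3 : finType).
Variables (E1 : rel V1) (lf1 : S -> V1) (E2 : rel V2) (lf2 : S -> V2).
Variables (E3 : rel V3) (lf3 : S -> V3).

Lemma sim_refl u : sim E1 lf1 E1 lf1 u u.
Proof. exact: nl_eqv_refl. Qed.

Lemma sim_sym u1 u2 : sim E1 lf1 E2 lf2 u1 u2 -> sim E2 lf2 E1 lf1 u2 u1.
Proof. exact: nl_eqv_sym. Qed.

Lemma sim_trans u1 u2 u3 : sim E1 lf1 E2 lf2 u1 u2 -> sim E2 lf2 E3 lf3 u2 u3 ->
  sim E1 lf1 E3 lf3 u1 u3.
Proof. exact: nl_eqv_trans. Qed.

Hypotheses (HN1 : is_network E1 lf1) (HN2 : is_network E2 lf2).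
Local Notation sim12 := (sim E1 lf1 E2 lf2).

Lemma sim_lf s u2 : sim12 (lf1 s) u2 -> u2 = lf2 s.
Proof. by rewrite /sim (nlab_lf HN1) => H; apply: (nlab_leafE HN2); apply: nl_eqv_leafL. Qed.

Lemma is_leaf_sim u1 u2 : sim12 u1 u2 -> is_leaf E1 u1 = is_leaf E2 u2.
Proof. by rewrite (is_leaf_nlab HN1) (is_leaf_nlab HN2) /sim; case. Qed.

Lemma labN_sim u1 u2 : sim12 u1 u2 -> labN lf1 u1 = labN lf2 u2.
Proof.
move=> H; case: (boolP (is_leaf E1 u1)) => [/(is_leafP HN1) [s Hs]|Hu1].
  by move: H; rewrite -Hs => /sim_lf ->; rewrite (labN_lf HN1) (labN_lf HN2).
by rewrite (labN_not_leaf HN1) ?(labN_not_leaf HN2) // -(is_leaf_sim H).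
Qed.

Lemma sim_child u1 u2 c1 : sim12 u1 u2 -> E1 u1 c1 -> exists2 c2, E2 u2 c2 & sim12 c1 c2.
Proof.
move=> H Ec1; have Hu1 := arc_not_leaf Ec1.
have Hu2 : ~~ is_leaf E2 u2 by rewrite -(is_leaf_sim H).
move: H; rewrite /sim (nlab_node HN1 Hu1) (nlab_node HN2 Hu2) => H.
have [l2 [l3 [[<-] Hp Hf]]] := nl_eqv_nodeL H.
have Hc1 : List.In (nlab E1 lf1 c1) l2.
  by apply: Permutation_in Hp _; apply: In_map_mem; rewrite mem_enum inE.
have [y Hy Hs] := Forall2_In_l Hf Hc1; have [c2 Hc2 Hyc] := In_mapP Hy.
by exists c2; [rewrite mem_enum inE in Hc2 | rewrite /sim -Hyc].
Qed.

Lemma sim_connect u1 u2 d1 : sim12 u1 u2 -> connect E1 u1 d1 ->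
  exists2 d2, connect E2 u2 d2 & sim12 d1 d2.
Proof.
move=> H /connectP [p Hp ->]; elim: p u1 u2 H Hp => /= [|w p IH] u1 u2 H.
  by exists u2.
case/andP=> Euw Hp; have [c2 Ec2 Hc2] := sim_child H Euw.
have [d2 Hd2 Hs] := IH _ _ Hc2 Hp.
by exists d2 => //; apply: connect_trans (connect1 Ec2) Hd2.
Qed.

Lemma cluster_sim_sub u1 u2 : sim12 u1 u2 -> cluster E1 lf1 u1 \subset cluster E2 lf2 u2.
Proof.
move=> H; apply/subsetP => s; rewrite !inE => /(sim_connect H) [d2 Hd Hs].
by rewrite -(sim_lf Hs).
Qed.

End Similarity.

Lemma cluster_sim (S V1 V2 : finType) (E1 : rel V1) (lf1 : S -> V1)
    (E2 : rel V2) (lf2 : S -> V2) u1 u2 :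
  is_network E1 lf1 -> is_network E2 lf2 ->
  sim E1 lf1 E2 lf2 u1 u2 -> cluster E1 lf1 u1 = cluster E2 lf2 u2.
Proof.
move=> HN1 HN2 H; apply/eqP; rewrite eqEsubset (cluster_sim_sub HN1 HN2 H) /=.
by apply: (cluster_sim_sub HN2 HN1); apply: sim_sym.
Qed.

Section Clades.
Variables (S V : finType) (E : rel V) (lf : S -> V).
Hypothesis HN : is_network E lf.
Local Notation simN := (sim E lf E lf).

Definition unique_nlab (v : V) := forall w, simN w v -> w = v.

Lemma unique_nlab_card v : unique_nlab v <-> #|[set w | `[< simN w v >]]| <= 1.
Proof.
split=> [Hv|/card_le1_eqP Hv w Hw]; last first.
  by apply: Hv; rewrite inE; apply/asboolP => //; apply: sim_refl.
by apply/card_le1_eqP => x y; rewrite !inE => /asboolP /Hv -> /asboolP /Hv ->.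
Qed.

Lemma inC_connect v x : inC E v -> connect E v x -> inC E x.
Proof.
move=> /forallP Hv Hx; apply/forallP => y; apply/implyP => Hy.
exact: implyP (Hv y) (connect_trans Hx Hy).
Qed.

Lemma inC_tree v : inC E v -> is_tree_node E v.
Proof. by move=> /forallP /(_ v) /implyP; apply. Qed.

(* Inside a clade every node has at most one parent, so two ancestors of a
   common node are comparable. *)
Lemma inC_connect_total v x w : inC E v -> connect E v x -> connect E w x ->
  connect E v w || connect E w v.
Proof.
move=> Hv Hvx /connectP [p Hp Hx]; elim: p w Hp Hx => /= [|y p IH] w.
  by move=> _ <-; rewrite Hvx.
case/andP=> Ewy Hp Hx; case/orP: (IH _ Hp Hx) => [Hvy|Hyv]; last first.
  by rewrite (connect_trans (connect1 Ewy) Hyv) orbT.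
case: (eqVneq v y) => [->|Hne]; first by rewrite (connect1 Ewy) orbT.
have [z Hvz Ezy] := connect_last Hvy Hne.
have /card_le1_eqP Hy := inC_tree (inC_connect Hv Hvy).
by rewrite (Hy z w) ?inE ?Hvz.
Qed.

Lemma sim_connect_eq v w : simN v w -> connect E v w -> v = w.
Proof.
move=> Hs Hc; case: (eqVneq v w) => // Hne.
by have := nl_size_connect HN Hc Hne; rewrite (nl_size_eqv Hs) ltnn.
Qed.

(* Two similar nodes have the same cluster, hence a common leaf below them;
   inside a clade one of them is then a descendant of the other. *)
Lemma inC_unique v : inC E v -> unique_nlab v.
Proof.
move=> Hv w Hw; have [s Hvs] := exists_leaf_desc HN v.
have Hws : connect E w (lf s).
  by move: (cluster_sim HN HN Hw) => /setP /(_ s); rewrite !inE Hvs.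
case/orP: (inC_connect_total Hv Hvs Hws) => H.
  by rewrite (sim_connect_eq (sim_sym Hw) H).
exact: sim_connect_eq Hw H.
Qed.

Lemma lf_unique s : unique_nlab (lf s).
Proof. by move=> w /sim_sym /(sim_lf HN HN). Qed.

Lemma not_conv_unique v : ~~ conv_other E lf v -> unique_nlab v.
Proof.
move=> Hv w Hw; case: (eqVneq w v) => // Hne; case/negP: Hv.
by apply/existsP; exists w; rewrite Hne (cluster_sim HN HN Hw) eqxx.
Qed.

Lemma has_convE : has_conv E lf = [exists u, conv_other E lf u].
Proof.
apply/existsP/existsP => [[u /existsP [w /andP [Huw Hc]]]|[u /existsP [w /andP [Hwu Hc]]]].
  by exists u; apply/existsP; exists w; rewrite eq_sym Huw eq_sym.
by exists w; apply/existsP; exists u; rewrite Hwu.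
Qed.

Lemma not_has_conv_unique v : ~~ has_conv E lf -> unique_nlab v.
Proof.
rewrite has_convE => /existsPn Hc; exact: not_conv_unique.
Qed.

End Clades.

Lemma Ups_eq_sym (S V1 V2 : finType) (E1 : rel V1) (lf1 : S -> V1)
    (E2 : rel V2) (lf2 : S -> V2) :
  Ups_eq E1 lf1 E2 lf2 -> Ups_eq E2 lf2 E1 lf1.
Proof. by move=> H x; rewrite H. Qed.

Section Counting.
Variables (S V1 V2 : finType) (E1 : rel V1) (lf1 : S -> V1) (E2 : rel V2) (lf2 : S -> V2).
Hypotheses (HN1 : is_network E1 lf1) (HN2 : is_network E2 lf2).
Hypothesis HU : Ups_eq E1 lf1 E2 lf2.
Local Notation sim12 := (sim E1 lf1 E2 lf2).
Local Notation sim11 := (sim E1 lf1 E1 lf1).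
Local Notation sim22 := (sim E2 lf2 E2 lf2).

Lemma exists_sim12 v1 : exists v2, sim12 v1 v2.
Proof.
have : 0 < Ups_mult E2 lf2 (nlab E1 lf1 v1).
  by rewrite -HU; apply/card_gt0P; exists v1; rewrite inE; apply/asboolP/sim_refl.
by case/card_gt0P => v2; rewrite inE => /asboolP /sim_sym; exists v2.
Qed.

Lemma exists_sim21 v2 : exists v1, sim12 v1 v2.
Proof.
have : 0 < Ups_mult E1 lf1 (nlab E2 lf2 v2).
  by rewrite HU; apply/card_gt0P; exists v2; rewrite inE; apply/asboolP/sim_refl.
by case/card_gt0P => v1; rewrite inE => /asboolP; exists v1.
Qed.

(* Both sets are unions of similarity classes, and corresponding classes have
   the same size by [HU]; remove one class at a time. *)
Lemma card_sim_transfer (P1 : V1 -> Prop) (P2 : V2 -> Prop) :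
  (forall v1 v2, sim12 v1 v2 -> (P1 v1 <-> P2 v2)) ->
  #|[set v | `[< P1 v >]]| = #|[set v | `[< P2 v >]]|.
Proof.
move: {2}#|_| (leqnn #|[set v | `[< P1 v >]]|) => n.
elim: n P1 P2 => [|n IH] P1 P2 Hn H12.
  rewrite leqn0 in Hn; rewrite (eqP Hn); apply/esym/eq_card0 => w2; rewrite inE.
  apply/negbTE/asboolPn => Hw2; have [v1 Hs] := exists_sim21 w2.
  by have := card0_eq (eqP Hn) v1; rewrite inE asboolT //; apply/(H12 _ _ Hs).
case: (set_0Vmem [set v | `[< P1 v >]]) => [H0|[v]]; first by apply: IH; rewrite ?H0 ?cards0.
rewrite inE => /asboolP Hv; have [v2 Hv2] := exists_sim12 v.
have HC1 w : sim11 w v -> P1 w.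
  by move=> Hw; apply/(H12 _ v2 (sim_trans Hw Hv2))/(H12 _ _ Hv2).
have HC2 w : sim E2 lf2 E1 lf1 w v -> P2 w by move=> Hw; apply/(H12 v _ (sim_sym Hw)).
have Hclass : #|[set w | `[< sim11 w v >]]| = #|[set w | `[< sim E2 lf2 E1 lf1 w v >]]|.
  exact: HU (nlab E1 lf1 v).
rewrite (card_set_asbool_split HC1) (card_set_asbool_split HC2) Hclass.
congr addn; apply: IH => [|v1 w2 Hs].
  rewrite -ltnS; apply: leq_trans Hn; rewrite (card_set_asbool_split HC1) -add1n leq_add2r.
  by apply/card_gt0P; exists v; rewrite inE; apply/asboolP/sim_refl.
split=> -[H1 H2]; split; try by apply/(H12 _ _ Hs).
  by move=> H3; apply: H2; apply: sim_trans Hs H3.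
by move=> H3; apply: H2; apply: sim_trans (sim_sym Hs) H3.
Qed.

Lemma unique_nlab_sim v1 v2 : sim12 v1 v2 -> unique_nlab E1 lf1 v1 <-> unique_nlab E2 lf2 v2.
Proof.
move=> Hs; rewrite !unique_nlab_card (card_sim_transfer (P2 := fun w => sim22 w v2)) //.
move=> w1 w2 Hw; split=> H.
  exact: sim_trans (sim_sym Hw) (sim_trans H Hs).
exact: sim_trans Hw (sim_trans H (sim_sym Hs)).
Qed.

(* For a node with a unique nested label, its parents are exactly the nodes
   having a child similar to it, and this set is similarity-invariant. *)
Lemma card_parents_sim v1 v2 : sim12 v1 v2 -> unique_nlab E1 lf1 v1 ->
  #|parents E1 v1| = #|parents E2 v2|.
Proof.
move=> Hs Hu1; have Hu2 := proj1 (unique_nlab_sim Hs) Hu1.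
have parentsE (V : finType) (E : rel V) (lf : S -> V) v : unique_nlab E lf v ->
    parents E v = [set u : V | `[< exists2 c, E u c & sim E lf E lf c v >]].
  move=> Hu; apply/setP => u; rewrite !inE; apply/idP/asboolP => [Euv|[c Euc /Hu <- //]].
  by exists v => //; apply: sim_refl.
rewrite (parentsE _ _ _ _ Hu1) (parentsE _ _ _ _ Hu2); apply: card_sim_transfer.
move=> u1 u2 Hsu; split=> [[c1 Ec1 Hc1]|[c2 Ec2 Hc2]].
  have [c2 Ec2 Hc2] := sim_child HN1 HN2 Hsu Ec1.
  by exists c2 => //; apply: sim_trans (sim_sym Hc2) (sim_trans Hc1 Hs).
have [c1 Ec1 Hc1] := sim_child HN2 HN1 (sim_sym Hsu) Ec2.
by exists c1 => //; apply: sim_trans (sim_sym Hc1) (sim_trans Hc2 (sim_sym Hs)).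
Qed.
End Counting.

Section TransferClades.
Variables (S V1 V2 : finType) (E1 : rel V1) (lf1 : S -> V1) (E2 : rel V2) (lf2 : S -> V2).
Hypotheses (HN1 : is_network E1 lf1) (HN2 : is_network E2 lf2).
Hypothesis HU : Ups_eq E1 lf1 E2 lf2.
Local Notation sim12 := (sim E1 lf1 E2 lf2).

Lemma is_tree_node_sim v1 v2 : sim12 v1 v2 -> unique_nlab E1 lf1 v1 ->
  is_tree_node E1 v1 = is_tree_node E2 v2.
Proof. by move=> Hs Hu; rewrite /is_tree_node (card_parents_sim HN1 HN2 HU Hs Hu). Qed.

Lemma hleaf_sim v1 v2 : sim12 v1 v2 -> hleaf E1 v1 = hleaf E2 v2.
Proof.
move=> Hs; rewrite /hleaf -(is_leaf_sim HN1 HN2 Hs).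
case: (boolP (is_leaf E1 v1)) => //= /(is_leafP HN1) [s Hv1]; subst v1.
by rewrite /is_hybrid (card_parents_sim HN1 HN2 HU Hs (lf_unique (s := s) HN1)).
Qed.

Lemma arc_sim x1 x2 y1 y2 : sim12 x1 x2 -> sim12 y1 y2 -> unique_nlab E1 lf1 y1 ->
  E1 x1 y1 = E2 x2 y2.
Proof.
move=> Hx Hy Hu1; have Hu2 := proj1 (unique_nlab_sim HU Hy) Hu1.
apply/idP/idP => Exy.
  have [c2 Ec2 Hc2] := sim_child HN1 HN2 Hx Exy.
  by rewrite -(Hu2 c2) //; apply: sim_trans (sim_sym Hc2) Hy.
have [c1 Ec1 Hc1] := sim_child HN2 HN1 (sim_sym Hx) Exy.
by rewrite -(Hu1 c1) //; apply: sim_trans (sim_sym Hc1) (sim_sym Hy).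
Qed.

Lemma sim_inC v1 v2 : sim12 v1 v2 -> inC E1 v1 -> inC E2 v2.
Proof.
move=> Hs Hv1; apply/forallP => y2; apply/implyP => Hy2.
have [y1 Hy1 Hs'] := sim_connect HN2 HN1 (sim_sym Hs) Hy2.
have HC : inC E1 y1 := inC_connect Hv1 Hy1.
by rewrite -(is_tree_node_sim (sim_sym Hs') (inC_unique HN1 HC)) inC_tree.
Qed.

Lemma sim_conv_other v1 v2 : sim12 v1 v2 -> conv_other E1 lf1 v1 -> conv_other E2 lf2 v2.
Proof.
move=> Hs /existsP [w1 /andP [Hne /eqP Hcl]].
case: (boolP (conv_other E2 lf2 v2)) => // Hc2; case/negP: (Hc2).
have Hu2 := not_conv_unique HN2 Hc2.
have Hu1 := proj2 (unique_nlab_sim HU Hs) Hu2.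
have [w2 Hw2] := exists_sim12 HU w1.
apply/existsP; exists w2; apply/andP; split.
  apply: contra Hne => /eqP Hw; apply/eqP/Hu1.
  by apply: sim_trans Hw2 _; rewrite Hw; apply: sim_sym.
by rewrite -(cluster_sim HN1 HN2 Hw2) Hcl (cluster_sim HN1 HN2 Hs).
Qed.

End TransferClades.

Section TransferRemoval.
Variables (S V1 V2 : finType) (E1 : rel V1) (lf1 : S -> V1) (E2 : rel V2) (lf2 : S -> V2).
Hypotheses (HN1 : is_network E1 lf1) (HN2 : is_network E2 lf2).
Hypothesis HU : Ups_eq E1 lf1 E2 lf2.
Local Notation sim12 := (sim E1 lf1 E2 lf2).

Lemma inC_sim v1 v2 : sim12 v1 v2 -> inC E1 v1 = inC E2 v2.
Proof.
move=> Hs; apply/idP/idP; first exact: (sim_inC HN1 HN2 HU Hs).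
exact: (sim_inC HN2 HN1 (Ups_eq_sym HU) (sim_sym Hs)).
Qed.

Lemma conv_other_sim v1 v2 : sim12 v1 v2 -> conv_other E1 lf1 v1 = conv_other E2 lf2 v2.
Proof.
move=> Hs; apply/idP/idP; first exact: (sim_conv_other HN1 HN2 HU Hs).
exact: (sim_conv_other HN2 HN1 (Ups_eq_sym HU) (sim_sym Hs)).
Qed.

Lemma internalS_sim v1 v2 : sim12 v1 v2 -> internalS E1 v1 = internalS E2 v2.
Proof. by move=> Hs; rewrite /internalS (inC_sim Hs) (is_leaf_sim HN1 HN2 Hs). Qed.

Lemma has_conv_sim : has_conv E1 lf1 = has_conv E2 lf2.
Proof.
rewrite !has_convE; apply/existsP/existsP => [[u1 Hu1]|[u2 Hu2]].
  by have [u2 Hs] := exists_sim12 HU u1; exists u2; rewrite -(conv_other_sim Hs).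
by have [u1 Hs] := exists_sim21 HU u2; exists u1; rewrite (conv_other_sim Hs).
Qed.

(* If v1 is removed only because of some convergent ancestor d1, then v1 is
   unique, so the descendant of a partner of d1 similar to v1 is its partner. *)
Lemma sim_removed v1 v2 : sim12 v1 v2 -> removed E1 lf1 v1 -> removed E2 lf2 v2.
Proof.
move=> Hs /andP [Hi /existsP [d1 /and3P [Hd Hc Hdv]]].
rewrite /removed -(internalS_sim Hs) Hi /=.
case: (boolP (conv_other E1 lf1 v1)) => Hcv.
  apply/existsP; exists v2.
  by rewrite -(internalS_sim Hs) -(conv_other_sim Hs) Hi Hcv connect0.
have Hu2 := proj1 (unique_nlab_sim HU Hs) (not_conv_unique HN1 Hcv).
have [d2 Hd2] := exists_sim12 HU d1.
have [u2 Hu Hsu] := sim_connect HN1 HN2 Hd2 Hdv.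
have <- : u2 = v2 by apply: Hu2; apply: sim_trans (sim_sym Hsu) Hs.
by apply/existsP; exists d2; rewrite -(internalS_sim Hd2) -(conv_other_sim Hd2) Hd Hc Hu.
Qed.

Lemma sim_clade_root r1 r2 : sim12 r1 r2 -> clade_root E1 r1 -> clade_root E2 r2.
Proof.
move=> Hs /andP [Hi /forallP Hp]; rewrite /clade_root -(inC_sim Hs) Hi /=.
apply/forallP => p2; apply/implyP => Ep2; apply/negP => Hp2.
have [p1 Hp1] := exists_sim21 HU p2.
have [c1 Ec1 Hc1] := sim_child HN2 HN1 (sim_sym Hp1) Ep2.
have Hc : c1 = r1 by apply: (inC_unique HN1 Hi); apply: sim_trans (sim_sym Hc1) (sim_sym Hs).
by move: (Hp p1); rewrite -Hc Ec1 (inC_sim Hp1) Hp2.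
Qed.

End TransferRemoval.

Section TransferArcs.
Variables (S V1 V2 : finType) (E1 : rel V1) (lf1 : S -> V1) (E2 : rel V2) (lf2 : S -> V2).
Hypotheses (HN1 : is_network E1 lf1) (HN2 : is_network E2 lf2).
Hypothesis HU : Ups_eq E1 lf1 E2 lf2.
Local Notation sim12 := (sim E1 lf1 E2 lf2).

Lemma removed_sim v1 v2 : sim12 v1 v2 -> removed E1 lf1 v1 = removed E2 lf2 v2.
Proof.
move=> Hs; apply/idP/idP; first exact: (sim_removed HN1 HN2 HU Hs).
exact: (sim_removed HN2 HN1 (Ups_eq_sym HU) (sim_sym Hs)).
Qed.

Lemma clade_root_sim r1 r2 : sim12 r1 r2 -> clade_root E1 r1 = clade_root E2 r2.
Proof.
move=> Hs; apply/idP/idP; first exact: (sim_clade_root HN1 HN2 HU Hs).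
exact: (sim_clade_root HN2 HN1 (Ups_eq_sym HU) (sim_sym Hs)).
Qed.

Lemma keptS_sim v1 v2 : sim12 v1 v2 -> keptS E1 lf1 v1 = keptS E2 lf2 v2.
Proof.
by move=> Hs; rewrite /keptS (internalS_sim HN1 HN2 HU Hs) (removed_sim Hs).
Qed.

Lemma sim_newarc x1 x2 t1 t2 : sim12 x1 x2 -> sim12 t1 t2 -> unique_nlab E1 lf1 t1 ->
  newarc E1 lf1 x1 t1 -> newarc E2 lf2 x2 t2.
Proof.
move=> Hx Ht Hu /existsP [v1 /and3P [Hr Ev Hc]].
have Hu2 := proj1 (unique_nlab_sim HU Ht) Hu.
have [c2 Ec2 Hc2] := sim_child HN1 HN2 Hx Ev.
have [t' Ht' Hst] := sim_connect HN1 HN2 Hc2 Hc.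
have Heq : t' = t2 by apply: Hu2; apply: sim_trans (sim_sym Hst) Ht.
by apply/existsP; exists c2; rewrite -(removed_sim Hc2) Hr Ec2 -Heq Ht'.
Qed.

End TransferArcs.

Lemma newarc_sim (S V1 V2 : finType) (E1 : rel V1) (lf1 : S -> V1)
    (E2 : rel V2) (lf2 : S -> V2) x1 x2 t1 t2 :
  is_network E1 lf1 -> is_network E2 lf2 -> Ups_eq E1 lf1 E2 lf2 ->
  sim E1 lf1 E2 lf2 x1 x2 -> sim E1 lf1 E2 lf2 t1 t2 -> unique_nlab E1 lf1 t1 ->
  newarc E1 lf1 x1 t1 = newarc E2 lf2 x2 t2.
Proof.
move=> HN1 HN2 HU Hx Ht Hu; apply/idP/idP; first exact: (sim_newarc HN1 HN2 HU Hx Ht Hu).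
apply: (sim_newarc HN2 HN1 (Ups_eq_sym HU) (sim_sym Hx) (sim_sym Ht)).
exact: (unique_nlab_sim HU Ht).1 Hu.
Qed.

Definition node_of (T : Type) (a : T + T) : T := match a with inl v | inr v => v end.

Section SurvivingNodes.
Variables (S V : finType) (E : rel V) (lf : S -> V).
Hypothesis HN : is_network E lf.

Lemma keptS_unique v : keptS E lf v -> unique_nlab E lf v.
Proof.
case/andP=> Hi Hr; apply: (not_conv_unique HN); apply: contra Hr => Hc.
by apply/andP; split=> //; apply/existsP; exists v; rewrite Hi Hc connect0.
Qed.

Lemma keep3_unique a : keep3 E lf a -> unique_nlab E lf (node_of a).
Proof.
case: a => [v /or3P [/keptS_unique|/andP [/(is_leafP HN) [s <-] _]|/(inC_unique HN)] //|r].
  exact: lf_unique.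
by case/andP=> /(inC_unique HN).
Qed.

Lemma A3_keep3 a b : A3 E lf a b -> keep3 E lf a && keep3 E lf b.
Proof.
case: a => [x|r]; case: b => [y|r'] //=.
- case/or3P=> /and3P [Hx Hy _]; last by rewrite Hx Hy orbT.
    by case/orP: Hx => ->; case/orP: Hy => ->; rewrite ?orbT.
  by rewrite Hx Hy !orbT.
- by case/and3P=> -> -> _.
- by case/andP=> Hr /eqP ->; rewrite Hr; case/andP: Hr => ->; rewrite !orbT.
Qed.

Lemma A3_keep3l a b : A3 E lf a b -> keep3 E lf a.
Proof. by case/A3_keep3/andP. Qed.

Lemma A3_keep3r a b : A3 E lf a b -> keep3 E lf b.
Proof. by case/A3_keep3/andP. Qed.

Lemma keepR_unique a : keepR E lf a -> unique_nlab E lf (node_of a).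
Proof.
rewrite /keepR; case: ifP => [_ /andP [/keep3_unique] //|].
by case: a => // v /negbT /(not_has_conv_unique HN).
Qed.

End SurvivingNodes.

Section Isomorphism.
Variables (S V1 V2 : finType) (E1 : rel V1) (lf1 : S -> V1) (E2 : rel V2) (lf2 : S -> V2).
Hypotheses (HN1 : is_network E1 lf1) (HN2 : is_network E2 lf2).
Hypothesis HU : Ups_eq E1 lf1 E2 lf2.
Variable g : V1 -> V2.
Hypothesis g_sim : forall v, sim E1 lf1 E2 lf2 v (g v).

Definition lift (a : V1 + V1) : V2 + V2 :=
  match a with inl v => inl (g v) | inr r => inr (g r) end.

Lemma g_inj v w : unique_nlab E1 lf1 v -> g w = g v -> w = v.
Proof.
by move=> Hv Hg; apply: Hv; apply: sim_trans (g_sim w) _; rewrite Hg; apply: sim_sym.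
Qed.

Lemma g_surj y : unique_nlab E2 lf2 y -> exists x, g x = y.
Proof.
move=> Hy; have [x Hx] := exists_sim21 HU y.
by exists x; apply: Hy; apply: sim_trans (sim_sym (g_sim x)) Hx.
Qed.

Lemma lift_inj a b : unique_nlab E1 lf1 (node_of b) -> lift a = lift b -> a = b.
Proof.
by case: a => x; case: b => y /= Hy //; case=> /(g_inj Hy) ->.
Qed.

Lemma lift_surj b : unique_nlab E2 lf2 (node_of b) -> exists a, lift a = b.
Proof. by case: b => y /= /g_surj [x <-]; [exists (inl x) | exists (inr x)]. Qed.

Lemma keep3_lift a : keep3 E2 lf2 (lift a) = keep3 E1 lf1 a.
Proof.
case: a => [v|r] /=; last by rewrite (clade_root_sim HN1 HN2 HU (g_sim r)).
by rewrite -(keptS_sim HN1 HN2 HU (g_sim v)) -(hleaf_sim HN1 HN2 HU (g_sim v))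
           -(inC_sim HN1 HN2 HU (g_sim v)).
Qed.

Lemma A3_lift a b : keep3 E1 lf1 a -> keep3 E1 lf1 b ->
  A3 E2 lf2 (lift a) (lift b) = A3 E1 lf1 a b.
Proof.
move=> /(keep3_unique HN1) Ha /(keep3_unique HN1) Hb.
have Hkept v := keptS_sim HN1 HN2 HU (g_sim v).
have Harc x y := arc_sim HN1 HN2 HU (g_sim x) (g_sim y).
have Hnew x y := newarc_sim HN1 HN2 HU (g_sim x) (g_sim y).
case: a Ha => [x|r] Ha; case: b Hb => [y|r'] /= Hb //.
- by rewrite -!Hkept -!(hleaf_sim HN1 HN2 HU (g_sim _)) -!(inC_sim HN1 HN2 HU (g_sim _))
             Harc ?Hnew.
- by rewrite -(clade_root_sim HN1 HN2 HU (g_sim r')) -Hkept Harc ?Hnew.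
- rewrite -(clade_root_sim HN1 HN2 HU (g_sim r)); congr andb.
  by apply/eqP/eqP => [/g_inj ->|->].
Qed.

Lemma card_lift (P1 : pred (V1 + V1)) (P2 : pred (V2 + V2)) :
  (forall a, P1 a -> keep3 E1 lf1 a) -> (forall b, P2 b -> keep3 E2 lf2 b) ->
  (forall a, keep3 E1 lf1 a -> P2 (lift a) = P1 a) ->
  #|[set b | P2 b]| = #|[set a | P1 a]|.
Proof.
move=> HP1 HP2 HP; have -> : [set b | P2 b] = lift @: [set a | P1 a].
  apply/setP => b; rewrite inE; apply/idP/imsetP => [Hb|[a + ->]].
    have [a Hab] := lift_surj (keep3_unique HN2 (HP2 b Hb)).
    by exists a; rewrite // inE -HP -?keep3_lift Hab ?HP2.
  by rewrite inE => Ha; rewrite HP ?HP1.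
rewrite card_in_imset // => a b; rewrite !inE => _ /HP1 /(keep3_unique HN1).
exact: lift_inj.
Qed.

Lemma elem3_lift a : elem3 E2 lf2 (lift a) = elem3 E1 lf1 a.
Proof.
rewrite /elem3 keep3_lift; case: (boolP (keep3 E1 lf1 a)) => //= Ha.
have -> : #|[set b | A3 E2 lf2 b (lift a)]| = #|[set b | A3 E1 lf1 b a]|.
  by apply: card_lift => [b /A3_keep3l|b /A3_keep3l|b Hb] //; apply: A3_lift.
have -> : #|[set b | A3 E2 lf2 (lift a) b]| = #|[set b | A3 E1 lf1 a b]|.
  by apply: card_lift => [b /A3_keep3r|b /A3_keep3r|b Hb] //; apply: A3_lift.
by [].
Qed.

Lemma A3e_lift a b : keep3 E1 lf1 a -> keep3 E1 lf1 b ->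
  A3e E2 lf2 (lift a) (lift b) = A3e E1 lf1 a b.
Proof. by move=> Ha Hb; rewrite /A3e A3_lift // elem3_lift. Qed.

Lemma connect_A3e_lift a c : keep3 E1 lf1 a -> connect (A3e E1 lf1) a c ->
  keep3 E1 lf1 c /\ connect (A3e E2 lf2) (lift a) (lift c).
Proof.
move=> Ha /connectP [p Hp ->]; elim: p a Ha Hp => /= [|y p IH] a Ha; first by [].
case/andP=> Hay Hp; have Hy := A3_keep3r (andP Hay).1.
have [Hc Hcon] := IH y Hy Hp; split=> //.
by apply: connect_trans Hcon; apply: connect1; rewrite A3e_lift.
Qed.

Lemma connect_A3e_unlift a c2 : keep3 E1 lf1 a -> connect (A3e E2 lf2) (lift a) c2 ->
  exists c, [/\ keep3 E1 lf1 c, lift c = c2 & connect (A3e E1 lf1) a c].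
Proof.
move=> Ha /connectP [p Hp ->]; elim: p a Ha Hp => /= [|y p IH] a Ha.
  by exists a.
case/andP=> Hay Hp; have Hy := A3_keep3r (andP Hay).1.
have [y1 Hy1] := lift_surj (keep3_unique HN2 Hy); subst y.
have Hy1 : keep3 E1 lf1 y1 by rewrite -keep3_lift.
have [c [Hc Hfc Hcon]] := IH _ Hy1 Hp; exists c; split=> //.
by apply: connect_trans Hcon; apply: connect1; rewrite -A3e_lift.
Qed.

Lemma keepR_lift a : keepR E2 lf2 (lift a) = keepR E1 lf1 a.
Proof.
by rewrite /keepR -(has_conv_sim HN1 HN2 HU) keep3_lift elem3_lift; case: a.
Qed.

Lemma AR_lift a b : keepR E1 lf1 a -> keepR E1 lf1 b ->
  AR E2 lf2 (lift a) (lift b) = AR E1 lf1 a b.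
Proof.
rewrite /AR -(has_conv_sim HN1 HN2 HU) !keepR_lift.
case: ifP => Hc Ha Hb; last first.
  move: Ha Hb; rewrite /keepR Hc; case: a => // x; case: b => // y _ _ /=.
  have Hy := not_has_conv_unique (v := y) HN1 (negbT Hc).
  by rewrite (arc_sim HN1 HN2 HU (g_sim x) (g_sim y) Hy).
rewrite Ha Hb /=; have keep3R x : keepR E1 lf1 x -> keep3 E1 lf1 x.
  by rewrite /keepR Hc => /andP [].
move: Ha Hb => /keep3R Ha /keep3R Hb.
apply/existsP/existsP => [[c2 /andP [Hcon Hc2b]]|[c /andP [Hcon Hcb]]].
  have [c [Hkc Hc2 Hcon1]] := connect_A3e_unlift Ha Hcon; subst c2.
  by exists c; rewrite Hcon1 -(A3_lift Hkc Hb).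
have [Hkc Hcon2] := connect_A3e_lift Ha Hcon.
by exists (lift c); rewrite Hcon2 (A3_lift Hkc Hb).
Qed.

Lemma labR_lift a : labR lf2 (lift a) = labR lf1 a.
Proof. by case: a => [v|r] //=; rewrite (labN_sim HN1 HN2 (g_sim v)). Qed.

Lemma lift_iso : indistinguishable E1 lf1 E2 lf2.
Proof.
exists lift; split.
- by move=> a Ha; rewrite keepR_lift.
- move=> b Hb; have [a Hab] := lift_surj (keepR_unique HN2 Hb).
  by exists a; rewrite // -keepR_lift Hab.
- by move=> a b _ /(keepR_unique HN1); apply: lift_inj.
- exact: AR_lift.
- by move=> a _; apply: labR_lift.
Qed.

End Isomorphism.

Theorem theorem2 (S V1 V2 : finType) (E1 : rel V1) (lf1 : S -> V1)
    (E2 : rel V2) (lf2 : S -> V2) :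
  is_network E1 lf1 -> is_network E2 lf2 ->
  Ups_eq E1 lf1 E2 lf2 ->
  indistinguishable E1 lf1 E2 lf2.
Proof.
move=> HN1 HN2 HU.
have [g g_sim] : exists g : V1 -> V2, forall v, sim E1 lf1 E2 lf2 v (g v).
  by apply: fin_all_exists => v; apply: exists_sim12 HU v.
exact: (lift_iso HN1 HN2 HU g_sim).
Qed.
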